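(* The following algorithm is a linearizable, sequentially-exact, wait-free and fence-free implementation of RangeMaxRegister. It uses only atomic Read/Write objects and has constant step complexity in all its operations. The shared object is an atomic Read/Write register $R$ initialized to $1$. Each process has a persistent local variable $r$ initialized to $1$. ${\sf RMaxWrite}(x)$: $r\leftarrow\max\{r,R.{\sf Read}()\}$; if $x>r$ then $\{r\leftarrow x,\ R.{\sf Write}(x)\}$; return true. ${\sf RMaxRead}()$: $r\leftarrow\max\{r,R.{\sf Read}()\}$; return $r$.
   Context: Model: $n\ge2$ asynchronous, crash-prone processes $p_0,\dots,p_{n-1}$ communicate through atomic base objects. Each atomic base-object operation is one step. The notation $\{I_1,I_2\}$ means the two instructions may be executed in either order. RangeMaxRegister (sequential specification). States are $n$-vectors $(r_0,\dots,r_{n-1})$ of natural numbers, with initial state $(1,\dots,1)$. Invocations by $p_i$ carry subscript $i$. - ${\sf RMaxWrite}_i(x)$ sets $r_i\leftarrow x$ if $x>r_i$ (otherwise leaves the state unchanged) and returns true. - ${\sf RMaxRead}_i()$ may return any $x\in\{r_i,r_i+1,\dots,\max(r_0,\dots,r_{n-1})\}$, and sets $r_i\leftarrow x$. MaxRegister (sequential specification, initial value $1$). MaxWrite$(v)$ writes $v$ only if $v$ exceeds the largest value written so far. MaxRead returns the largest value written so far. Properties: - Linearizable: every finite execution admits a total order of its completed (and possibly some pending) operations that is a sequential execution of the specification, respects real-time order, and agrees on inputs and outputs. - Sequentially-exact: every sequential execution of the algorithm (one in which no two operations overlap) is a sequential execution of MaxRegister, with RMaxRead and RMaxWrite read as MaxRead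 and MaxWrite. - Wait-free: every operation of a process that keeps taking steps completes in finitely many of its own steps. - Fence-free: the algorithm requires no ordering among its steps beyond data dependence. - Step complexity: the maximum number of steps needed to complete an operation. *)

From mathcomp Require Import all_boot.
Unset Printing Implicit Defensive.

(* Operations and responses (shared by RangeMaxRegister and MaxRegister;     *)
(* RMaxWrite/RMaxRead are read as MaxWrite/MaxRead for sequential exactness) *)
Inductive op := RMaxWrite (x : nat) | RMaxRead.
Inductive res := Rbool (b : bool) | Rnat (v : nat).

Inductive event (n : nat) := Inv (i : 'I_n) (o : op) | Res (i : 'I_n) (r : res).
Arguments Inv {n}. Arguments Res {n}.

Definition proc_of n (e : event n) : 'I_n :=
  match e with Inv i _ => i | Res i _ => i end.
Arguments proc_of {n}.

Record seq_spec (n : nat) := SeqSpec {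
  sst : Type;
  sinit : sst;
  sstep : sst -> 'I_n -> op -> res -> sst -> Prop }.
Arguments sst {n}. Arguments sinit {n}. Arguments sstep {n}.

Fixpoint legal n (S : seq_spec n) (s : sst S) (l : seq ('I_n * op * res)) : Prop :=
  match l with
  | [::] => True
  | (i, o, r) :: l' => exists s', @sstep n S s i o r s' /\ @legal n S s' l'
  end.
Arguments legal {n} S s l.

Definition rmr_step n (s : 'I_n -> nat) (i : 'I_n) (o : op) (r : res)
    (s' : 'I_n -> nat) : Prop :=
  match o with
  | RMaxWrite x =>
      r = Rbool true /\
      (forall j, s' j = if j == i then (if s i < x then x else s i) else s j)
  | RMaxRead =>
      exists x, r = Rnat x /\ s i <= x /\ x <= \max_(j < n) s j /\
      (forall j, s' j = if j == i then x else s j)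
  end.

Definition RangeMaxRegister (n : nat) : seq_spec n :=
  @SeqSpec n ('I_n -> nat) (fun _ => 1) (@rmr_step n).

Definition mr_step n (s : nat) (i : 'I_n) (o : op) (r : res) (s' : nat) : Prop :=
  match o with
  | RMaxWrite v => r = Rbool true /\ s' = (if s < v then v else s)
  | RMaxRead => r = Rnat s /\ s' = s
  end.

Definition MaxRegister (n : nat) : seq_spec n :=
  @SeqSpec n nat 1 (@mr_step n).

(* LStep i  = one atomic base-object step of process i;
   LEnv     = a memory-system action (only used in the relaxed semantics,
              where it makes a buffered write take effect). *)
Inductive label (n : nat) :=
  | LInv (i : 'I_n) (o : op) | LRes (i : 'I_n) (r : res)
  | LStep (i : 'I_n) | LEnv.
Arguments LInv {n}. Arguments LRes {n}. Arguments LStep {n}. Arguments LEnv {n}.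

Record impl (n : nat) := Impl {
  icfg : Type;
  iinit : icfg;
  istep : icfg -> label n -> icfg -> Prop }.
Arguments icfg {n}. Arguments iinit {n}. Arguments istep {n}.

Inductive exec n (I : impl n) : icfg I -> seq (label n) -> icfg I -> Prop :=
  | ex_nil c : exec n I c [::] c
  | ex_cons c l c' ls c'' :
      istep I c l c' -> exec n I c' ls c'' -> exec n I c (l :: ls) c''.
Arguments exec {n}.

Definition label_event n (l : label n) : option (event n) :=
  match l with
  | LInv i o => Some (Inv i o)
  | LRes i r => Some (Res i r)
  | _ => None
  end.

Definition history n (ls : seq (label n)) : seq (event n) := pmap (@label_event n) ls.
Arguments history {n}.

Definition matched n (h : seq (event n)) (k k' : nat) (r : res) : Prop :=
  exists i o, onth h k = Some (Inv i o) /\ k < k' /\ onth h k' = Some (Res i r) /\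
    (forall j e, k < j < k' -> onth h j = Some e -> proc_of e <> i).
Arguments matched {n}.

(* A linearization L lists operations (by their invocation index in h) with
   their process, invocation and (possibly chosen) response:
   - it contains every completed operation, with its actual response,
   - possibly some pending operations, with some response,
   - each operation at most once,
   - it is a sequential execution of the specification,
   - it respects the real-time order of h. *)
Definition linearizable_hist n (S : seq_spec n) (h : seq (event n)) : Prop :=
  exists L : seq (nat * ('I_n * op * res)),
    (forall j k i o r, onth L j = Some (k, (i, o, r)) ->
        onth h k = Some (Inv i o) /\
        (forall k' r', matched h k k' r' -> r = r')) /\
    (forall k k' r, matched h k k' r -> exists j i o, onth L j = Some (k, (i, o, r))) /\
    (forall j1 j2 k x1 x2, onth L j1 = Some (k, x1) -> onth L j2 = Some (k, x2) ->
        j1 = j2) /\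
    legal S (sinit S) (map snd L) /\
    (forall j1 j2 k1 k2 x1 x2 k1' r1,
        onth L j1 = Some (k1, x1) -> onth L j2 = Some (k2, x2) ->
        matched h k1 k1' r1 -> k1' < k2 -> j1 < j2).
Arguments linearizable_hist {n}.

Definition linearizable n (S : seq_spec n) (I : impl n) : Prop :=
  forall ls c, exec I (iinit I) ls c -> linearizable_hist S (history ls).
Arguments linearizable {n}.

Inductive seqhist n : seq (event n) -> seq ('I_n * op * res) -> Prop :=
  | SH_nil : seqhist n [::] [::]
  | SH_pend i o : seqhist n [:: Inv i o] [::]
  | SH_cons i o r h l : seqhist n h l -> seqhist n (Inv i o :: Res i r :: h) ((i, o, r) :: l).
Arguments seqhist {n}.

Definition sequentially_exact n (I : impl n) : Prop :=
  forall ls c l, exec I (iinit I) ls c -> seqhist (history ls) l ->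
    legal (MaxRegister n) (sinit (MaxRegister n)) l.
Arguments sequentially_exact {n}.

Definition is_action_of n (i : 'I_n) (l : label n) : bool :=
  match l with LStep j => j == i | LRes j _ => j == i | _ => false end.
Definition is_step_of n (i : 'I_n) (l : label n) : bool :=
  match l with LStep j => j == i | _ => false end.
Definition is_res_of n (i : 'I_n) (l : label n) : bool :=
  match l with LRes j _ => j == i | _ => false end.
Arguments is_action_of {n}. Arguments is_step_of {n}. Arguments is_res_of {n}.

Definition inf_exec n (I : impl n) (sched : nat -> label n) : Prop :=
  exists cs : nat -> icfg I, cs 0 = iinit I /\
    forall t, istep I (cs t) (sched t) (cs t.+1).
Arguments inf_exec {n}.

Definition wait_free n (I : impl n) : Prop :=
  forall sched, inf_exec I sched ->
  forall k i o, sched k = LInv i o ->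
    (forall T, exists t, T <= t /\ is_action_of i (sched t)) ->
    exists t r, k < t /\ sched t = LRes i r.
Arguments wait_free {n}.

Definition step_complexity_le n (I : impl n) (c : nat) : Prop :=
  forall ls cf, exec I (iinit I) ls cf ->
  forall k i o m, onth ls k = Some (LInv i o) ->
    ~~ has (is_res_of i) (take m (drop k.+1 ls)) ->
    count (is_step_of i) (take m (drop k.+1 ls)) <= c.
Arguments step_complexity_le {n}.

Inductive pcs :=
  | Idle
  | WBegin (x : nat)    (* RMaxWrite(x): about to read R            *)
  | WDoWrite (x : nat)  (* RMaxWrite(x): x > r, about to write R    *)
  | WDone               (* RMaxWrite: about to return true           *)
  | RBegin              (* RMaxRead: about to read R                 *)
  | RDone (v : nat).    (* RMaxRead: about to return v               *)

(* aR: the shared register R; aloc i: the persistent local r of p_i;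
   abuf: writes issued but not yet taken effect (relaxed semantics only). *)
Record acfg (n : nat) := ACfg {
  aR : nat; aloc : 'I_n -> nat; apc : 'I_n -> pcs; abuf : seq nat }.
Arguments ACfg {n}. Arguments aR {n}. Arguments aloc {n}. Arguments apc {n}. Arguments abuf {n}.

Definition upd n T (f : 'I_n -> T) (i : 'I_n) (v : T) : 'I_n -> T :=
  fun j => if j == i then v else f j.
Arguments upd {n T}.

(* relaxed = false: sequentially consistent semantics, each R.Read/R.Write is
   an atomic step.  relaxed = true: a Write by a process only enters a pending
   pool and takes effect at an arbitrary later moment (LEnv), in arbitrary
   order; thus the only ordering kept among the steps of a process is data
   dependence (a write depends on the preceding read of its operation). *)
Definition alg_step (relaxed : bool) n (c : acfg n) (l : label n) (c' : acfg n) : Prop :=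
  match l with
  | LInv i (RMaxWrite x) =>
      apc c i = Idle /\ c' = ACfg (aR c) (aloc c) (upd (apc c) i (WBegin x)) (abuf c)
  | LInv i RMaxRead =>
      apc c i = Idle /\ c' = ACfg (aR c) (aloc c) (upd (apc c) i RBegin) (abuf c)
  | LStep i =>
      match apc c i with
      | WBegin x =>
          let r := maxn (aloc c i) (aR c) in
          c' = ACfg (aR c) (upd (aloc c) i r)
                    (upd (apc c) i (if r < x then WDoWrite x else WDone)) (abuf c)
      | WDoWrite x =>
          if relaxed then
            c' = ACfg (aR c) (upd (aloc c) i x) (upd (apc c) i WDone) (x :: abuf c)
          else
            c' = ACfg x (upd (aloc c) i x) (upd (apc c) i WDone) (abuf c)
      | RBegin =>
          let r := maxn (aloc c i) (aR c) in
          c' = ACfg (aR c) (upd (aloc c) i r) (upd (apc c) i (RDone r)) (abuf c)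
      | _ => False
      end
  | LRes i rs =>
      match apc c i, rs with
      | WDone, Rbool true =>
          c' = ACfg (aR c) (aloc c) (upd (apc c) i Idle) (abuf c)
      | RDone v, Rnat w =>
          v = w /\ c' = ACfg (aR c) (aloc c) (upd (apc c) i Idle) (abuf c)
      | _, _ => False
      end
  | LEnv =>
      relaxed /\ exists b1 v b2, abuf c = b1 ++ v :: b2 /\
        c' = ACfg v (aloc c) (apc c) (b1 ++ b2)
  end.

Definition alg_init n : acfg n := ACfg 1 (fun _ => 1) (fun _ => Idle) [::].

Definition alg (relaxed : bool) (n : nat) : impl n :=
  @Impl n (acfg n) (alg_init n) (@alg_step relaxed n).

(* Fence-freedom: the algorithm remains a linearizable implementation of
   RangeMaxRegister when its steps are only ordered by data dependence
   (writes may take effect arbitrarily late and out of order). *)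
Definition fence_free (n : nat) : Prop :=
  linearizable (RangeMaxRegister n) (alg true n).

(* Linearizability, under both the atomic and the relaxed memory
   semantics, is shown by a forward simulation that builds, along any
   execution, a linearization L and the RangeMaxRegister state S it reaches.
   A RMaxRead is linearized at its read of R, a RMaxWrite(x) at its write of R
   if it performs one and at its read of R otherwise.  The invariant is that
   S_j <= r_j for every process j, and that every value held in a local
   variable r_j, in R, or in a write not yet applied to R is at most max S:
   a value read is then always in the range the specification allows, no
   matter when or in which order writes take effect.  In a sequential
   execution, r_j <= R holds for every j between operations, so R is the
   largest value written so far and reads return exactly it.  Every operation
   takes at most two steps (read R, then possibly write R), and bounded step
   complexity alone implies wait-freedom. *)

From mathcomp Require Import all_boot zify.

Set Implicit Arguments.
Unset Strict Implicit.
Unset Printing Implicit Defensive.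

Lemma upd_eq n T (f : 'I_n -> T) i v : upd f i v i = v.
Proof. by rewrite /upd eqxx. Qed.

Lemma upd_neq n T (f : 'I_n -> T) i v j : j != i -> upd f i v j = f j.
Proof. by rewrite /upd => /negPf ->. Qed.

Lemma exec_cat n (I : impl n) c ls1 ls2 c2 : exec I c (ls1 ++ ls2) c2 ->
  exists c1, exec I c ls1 c1 /\ exec I c1 ls2 c2.
Proof.
elim: ls1 c => [|l ls1 IH] c /=; first by exists c; split=> //; constructor.
move=> E; inversion E as [|? ? c' ? ? st E']; subst.
have [c1 [E1 E2]] := IH _ E'.
by exists c1; split=> //; apply: ex_cons st E1.
Qed.

Lemma exec_rcons n (I : impl n) c ls c1 l c2 :
  exec I c ls c1 -> istep I c1 l c2 -> exec I c (rcons ls l) c2.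
Proof.
elim=> {c ls c1} [c st | c l' c' ls c1 st _ IH /IH]; last exact: ex_cons st.
by apply: ex_cons st _; constructor.
Qed.

Lemma exec_onth n (I : impl n) c ls c2 k l : exec I c ls c2 -> onth ls k = Some l ->
  exists c0 c1, istep I c0 l c1 /\ exec I c1 (drop k.+1 ls) c2.
Proof.
move=> E; elim: E k => {c ls c2} [c|c l' c' ls c2 st E IH] [|k] //=.
- by case=> <-; exists c, c'; rewrite drop0.
- exact: IH.
Qed.

Lemma onth_lt_size T (s : seq T) k x : onth s k = Some x -> k < size s.
Proof. by move=> sk; rewrite -onthTE sk. Qed.
(* Maximal implicits, so that these lemmas can serve as views. *)
Arguments onth_lt_size {T s k x}.

Lemma onth_rcons T (s : seq T) y k :
  onth (rcons s y) k = if k < size s then onth s k else if k == size s then Some y else None.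
Proof.
rewrite -cats1 onth_cat; case: ltngtP => [//|gt|->]; last by rewrite subnn.
by rewrite onth_default //= subn_gt0.
Qed.

Lemma onth_rcons_lt T (s : seq T) y k : k < size s -> onth (rcons s y) k = onth s k.
Proof. by rewrite onth_rcons => ->. Qed.

Lemma onth_rcons_old T (s : seq T) y k x : onth s k = Some x -> onth (rcons s y) k = Some x.
Proof. by move=> sk; rewrite onth_rcons_lt ?(onth_lt_size sk). Qed.
Arguments onth_rcons_old {T s y k x}.

Lemma onth_rcons_size T (s : seq T) y : onth (rcons s y) (size s) = Some y.
Proof. by rewrite onth_rcons ltnn eqxx. Qed.

Lemma onth_rconsP T (s : seq T) y k x : onth (rcons s y) k = Some x ->
  onth s k = Some x \/ k = size s /\ x = y.
Proof.
rewrite onth_rcons; case: ltnP => _; first by left.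
by case: eqP => // -> [<-]; right.
Qed.
Arguments onth_rconsP {T s y k x}.

Lemma upd_le n (f : 'I_n -> nat) i v m :
  (forall j, f j <= m) -> v <= m -> forall j, upd f i v j <= m.
Proof. by move=> f_le v_le j; rewrite /upd; case: eqP. Qed.

(** * Histories and partial linearizations *)

Section Histories.

Variable n : nat.
Implicit Types (h : seq (event n)) (i : 'I_n) (o : op) (r : res) (e : event n).

Definition pending h i k o :=
  onth h k = Some (Inv i o) /\
  forall k' e, k < k' -> onth h k' = Some e -> proc_of e <> i.

Lemma pending_rcons h i k o e : pending h i k o -> proc_of e <> i -> pending (rcons h e) i k o.
Proof.
move=> [hk later] ei; split; first exact: onth_rcons_old.
by move=> k' e' kk' /onth_rconsP [/(later _ _ kk') | [_ ->]].
Qed.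

Lemma pending_rcons_inv h i o : pending (rcons h (Inv i o)) i (size h) o.
Proof.
split=> [|k' e lt]; first exact: onth_rcons_size.
by rewrite onth_rcons ltnNge ltnW //= gtn_eqF.
Qed.

Lemma pending_not_matched h i k o k' r : pending h i k o -> ~ matched h k k' r.
Proof.
move=> [hk later] [i' [o' [hk' [lt [hr _]]]]].
rewrite hk in hk'; case: hk' => ii' _; subst i'.
by apply: (later _ _ lt hr).
Qed.

Lemma pending_unique h i k o k' o' : pending h i k o -> pending h i k' o' -> k' = k.
Proof.
move=> [hk later] [hk' later']; case: (ltngtP k k') => // lt.
- by have := later _ _ lt hk'.
- by have := later' _ _ lt hk.
Qed.

Lemma matched_rconsE h e k k' r : matched (rcons h e) k k' r ->
  matched h k k' r \/ k' = size h /\ exists i o, e = Res i r /\ pending h i k o.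
Proof.
move=> [i [o [hk [lt [hr between]]]]].
case/onth_rconsP: hr => [hr | [k'E <-]].
- left; exists i, o; split.
    by rewrite -hk onth_rcons_lt //; have := onth_lt_size hr; lia.
  split=> //; split=> // j e' kjk' hj.
  exact: between kjk' (onth_rcons_old hj).
- have kh : k < size h by rewrite -k'E.
  right; split=> //; exists i, o; split=> //; split; first by rewrite -hk onth_rcons_lt.
  move=> j e' kj hj; apply: between (onth_rcons_old hj).
  by rewrite kj k'E (onth_lt_size hj).
Qed.

Definition linseq := seq (nat * ('I_n * op * res)).
Implicit Types (L : linseq).

Definition unlinearized L k := forall j x, onth L j <> Some (k, x).

(* Every requirement of [linearizable_hist] except legality. *)
Definition partial_lin h L : Prop :=
  [/\ forall j k i o r, onth L j = Some (k, (i, o, r)) ->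
        onth h k = Some (Inv i o) /\ (forall k' r', matched h k k' r' -> r = r'),
      forall k k' r, matched h k k' r -> exists j i o, onth L j = Some (k, (i, o, r)),
      forall j1 j2 k x1 x2, onth L j1 = Some (k, x1) -> onth L j2 = Some (k, x2) -> j1 = j2 &
      forall j1 j2 k1 k2 x1 x2 k1' r1,
        onth L j1 = Some (k1, x1) -> onth L j2 = Some (k2, x2) ->
        matched h k1 k1' r1 -> k1' < k2 -> j1 < j2].

Lemma partial_lin_nil : partial_lin [::] [::].
Proof. by split=> [[]|k k' r [i [o []]]|[]|[]]; rewrite ?onth0n. Qed.

Lemma unlinearized_size h L : partial_lin h L -> unlinearized L (size h).
Proof.
by case=> inv _ _ _ j [[i o] r] /inv [/onth_lt_size]; rewrite ltnn.
Qed.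

Lemma partial_lin_invoke h L i o : partial_lin h L -> partial_lin (rcons h (Inv i o)) L.
Proof.
case=> inv complete uniq rt; split=> //.
- move=> j k i' o' r /inv [hk resp]; split; first exact: onth_rcons_old.
  by move=> k' r' /matched_rconsE [/resp | [_ [? [? [? _]]]]].
- by move=> k k' r /matched_rconsE [/complete | [_ [? [? [? _]]]]].
- move=> j1 j2 k1 k2 x1 x2 k1' r1 L1 L2 /matched_rconsE [m | [_ [? [? [? _]]]] //].
  exact: rt L1 L2 m.
Qed.

Lemma partial_lin_respond h L i k o r j0 : partial_lin h L -> pending h i k o ->
  onth L j0 = Some (k, (i, o, r)) -> partial_lin (rcons h (Res i r)) L.
Proof.
case=> inv complete uniq rt pend Lj0; split=> //.
- move=> j k1 i1 o1 r1 Lj; have [hk resp] := inv _ _ _ _ _ Lj.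
  split=> [|k' r' /matched_rconsE [/resp // | [_ [i2 [o2 [[<- <-] pend2]]]]]].
    exact: onth_rcons_old.
  have k1E := pending_unique pend pend2; subst k1.
  have jE := uniq _ _ _ _ _ Lj Lj0; subst j.
  by move: Lj; rewrite Lj0 => -[].
- move=> k1 k' r' /matched_rconsE [/complete // | [_ [i2 [o2 [[<- <-] pend2]]]]].
  by rewrite (pending_unique pend pend2); exists j0, i, o.
- move=> j1 j2 k1 k2 x1 [[i2 o2] r2] k1' r1 L1 L2 /matched_rconsE [m | [-> _]].
    exact: rt L1 L2 m.
  by have [/onth_lt_size + _] := inv _ _ _ _ _ L2; lia.
Qed.

Lemma partial_lin_rcons h L i k o r : partial_lin h L -> pending h i k o -> unlinearized L k ->
  partial_lin h (rcons L (k, (i, o, r))).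
Proof.
case=> inv complete uniq rt pend unlin; split.
- move=> j k1 i1 o1 r1 /onth_rconsP [/inv // | [_ [-> -> -> ->]]].
  by split=> [|k' r' /(pending_not_matched pend)]; first case: pend.
- by move=> k1 k' r1 /complete [j [i1 [o1 /onth_rcons_old]]]; exists j, i1, o1.
- move=> j1 j2 k1 x1 x2 L1 L2.
  case/onth_rconsP: L1 => [L1 | [-> [k1E _]]]; case/onth_rconsP: L2 => [L2 | [-> [k1E' _]]] //.
  + exact: uniq L1 L2.
  + by subst k1; case: (unlin _ _ L1).
  + by subst k1; case: (unlin _ _ L2).
- move=> j1 j2 k1 k2 x1 x2 k1' r1 L1 L2 m.
  case/onth_rconsP: L1 => [L1 | [_ [k1E _]]]; last by subst k1; case: (pending_not_matched pend m).
  by case/onth_rconsP: L2 => [L2 | [-> _ _]]; [apply: rt L1 L2 m | exact: (onth_lt_size L1)].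
Qed.

End Histories.

Section Runs.

Variables (n : nat) (Sp : seq_spec n).

Inductive runs : sst Sp -> seq ('I_n * op * res) -> sst Sp -> Prop :=
  | runs_nil s : runs s [::] s
  | runs_cons s i o r s1 l s2 : sstep Sp s i o r s1 -> runs s1 l s2 -> runs s ((i, o, r) :: l) s2.

Lemma runs_rcons s l s1 i o r s2 :
  runs s l s1 -> sstep Sp s1 i o r s2 -> runs s (rcons l (i, o, r)) s2.
Proof.
elim=> {s l s1} [s st | s i' o' r' s1 l s3 st _ IH /IH]; last exact: runs_cons st.
by apply: runs_cons st _; constructor.
Qed.

Lemma runs_legal s l s' : runs s l s' -> legal Sp s l.
Proof. by elim=> {s l s'} // s i o r s1 l s2 st _ IH; exists s1. Qed.

End Runs.
Arguments runs {n} Sp.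

(** * Linearizability *)

Section Linearizability.

Variables (rel : bool) (n : nat).
Implicit Types (h : seq (event n)) (L : linseq n) (c : acfg n) (S : 'I_n -> nat) (i : 'I_n).

Definition vmax S := \max_(j < n) S j.

Lemma leq_vmax S j : S j <= vmax S.
Proof. exact: (@leq_bigmax _ (fun j => S j) j). Qed.

Lemma vmax_mono S S' : (forall j, S j <= S' j) -> vmax S <= vmax S'.
Proof. by move=> le; apply/bigmax_leqP => j _; apply: leq_trans (le j) (leq_vmax S' j). Qed.

Definition cfg_inv c S :=
  [/\ forall j, S j <= aloc c j <= vmax S, aR c <= vmax S,
      forall b, b \in abuf c -> b <= vmax S &
      forall j x, apc c j = WDoWrite x -> aloc c j < x].

Lemma cfg_inv_update c S S' i v p R b :
  cfg_inv c S -> (forall j, j != i -> S' j = S j) -> S i <= S' i <= v ->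
  (v <= vmax S) || (v <= S' i) -> R <= maxn (aR c) v -> {subset b <= v :: abuf c} ->
  (forall x, p = WDoWrite x -> v < x) ->
  cfg_inv (ACfg R (upd (aloc c) i v) (upd (apc c) i p) b) S'.
Proof.
case=> loc_bd R_bd buf_bd pend_wr S'E /andP [le_Si le_S'i] v_bd R_le b_sub p_wr.
have grow : vmax S <= vmax S'.
  by apply: vmax_mono => j; case: (eqVneq j i) => [-> | /S'E ->] //; apply: leq_trans le_S'i.
have v_max : v <= vmax S'.
  by case/orP: v_bd => le; [apply: leq_trans grow | apply: leq_trans (leq_vmax S' i)].
have R_max : maxn (aR c) v <= vmax S' by rewrite geq_max v_max (leq_trans R_bd grow).
split=> [j||b' /b_sub|j x] /=.
- case: (eqVneq j i) => [-> | ji]; first by rewrite upd_eq le_S'i.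
  by rewrite upd_neq // S'E //; case/andP: (loc_bd j) => -> /leq_trans ->.
- exact: leq_trans R_le R_max.
- by rewrite in_cons => /orP [/eqP -> | /buf_bd /leq_trans ->].
- case: (eqVneq j i) => [-> | ji]; first by rewrite !upd_eq => /p_wr.
  by rewrite !upd_neq //; apply: pend_wr.
Qed.

Lemma cfg_inv_set_pc c S i p : cfg_inv c S -> (forall x, p = WDoWrite x -> aloc c i < x) ->
  cfg_inv (ACfg (aR c) (aloc c) (upd (apc c) i p) (abuf c)) S.
Proof.
case=> loc_bd R_bd buf_bd pend_wr p_wr; split=> // j x /=.
by case: (eqVneq j i) => [-> | ji]; rewrite ?upd_eq ?upd_neq //; [apply: p_wr | apply: pend_wr].
Qed.

Lemma cfg_inv_flush c S b1 v b2 : cfg_inv c S -> abuf c = b1 ++ v :: b2 ->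
  cfg_inv (ACfg v (aloc c) (apc c) (b1 ++ b2)) S.
Proof.
case=> loc_bd R_bd buf_bd pend_wr bE; split=> //= [|b b_in]; apply: buf_bd; rewrite bE.
- by rewrite mem_cat mem_head orbT.
- by move: b_in; rewrite !mem_cat in_cons => /orP [-> | ->]; rewrite ?orbT.
Qed.

(* The operation of [i] is in [L] exactly when it is past its linearization point. *)
Definition status h L p i : Prop :=
  match p with
  | Idle => True
  | WBegin x | WDoWrite x => exists k, pending h i k (RMaxWrite x) /\ unlinearized L k
  | RBegin => exists k, pending h i k RMaxRead /\ unlinearized L k
  | WDone => exists k x (m : nat),
      pending h i k (RMaxWrite x) /\ onth L m = Some (k, (i, RMaxWrite x, Rbool true))
  | RDone v => exists k (m : nat),
      pending h i k RMaxRead /\ onth L m = Some (k, (i, RMaxRead, Rnat v))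
  end.

Lemma status_rcons h L p j e : status h L p j -> proc_of e <> j -> status (rcons h e) L p j.
Proof.
move=> st ej; case: p st => [|x|x|||v] //=.
- by case=> k [pend unlin]; exists k; split=> //; apply: pending_rcons.
- by case=> k [pend unlin]; exists k; split=> //; apply: pending_rcons.
- by case=> k [x [j0 [pend Lj0]]]; exists k, x, j0; split=> //; apply: pending_rcons.
- by case=> k [pend unlin]; exists k; split=> //; apply: pending_rcons.
- by case=> k [j0 [pend Lj0]]; exists k, j0; split=> //; apply: pending_rcons.
Qed.

Lemma status_rcons_lin h L p j i k o r : status h L p j -> pending h i k o -> j != i ->
  status h (rcons L (k, (i, o, r))) p j.
Proof.
move=> st pend ji.
have unlin_rcons k' o' : pending h j k' o' -> unlinearized L k' ->
    unlinearized (rcons L (k, (i, o, r))) k'.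
  move=> pend' unlin j' x /onth_rconsP [/unlin // | [_ [kE _]]]; subst k'.
  case: pend pend' => hk _ [hk' _]; move: hk'; rewrite hk => -[ij _].
  by rewrite ij eqxx in ji.
case: p st => [|x|x|||v] //=.
- by case=> k' [pend' unlin]; exists k'; split=> //; apply: unlin_rcons pend' unlin.
- by case=> k' [pend' unlin]; exists k'; split=> //; apply: unlin_rcons pend' unlin.
- by case=> k' [x [j0 [pend' Lj0]]]; exists k', x, j0; split=> //; apply: onth_rcons_old.
- by case=> k' [pend' unlin]; exists k'; split=> //; apply: unlin_rcons pend' unlin.
- by case=> k' [j0 [pend' Lj0]]; exists k', j0; split=> //; apply: onth_rcons_old.
Qed.

Definition lin_inv h c L S :=
  [/\ runs (RangeMaxRegister n) (sinit (RangeMaxRegister n)) (map snd L) S,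
      partial_lin h L, cfg_inv c S & forall j, status h L (apc c j) j].

Lemma lin_inv_update_cfg h c c' L S i :
  lin_inv h c L S -> cfg_inv c' S -> (forall j, j != i -> apc c' j = apc c j) ->
  status h L (apc c' i) i -> lin_inv h c' L S.
Proof.
case=> run lin _ st cfg' others st_i; split=> // j.
by case: (eqVneq j i) => [-> // | /others ->].
Qed.

Lemma lin_inv_linearize h c c' L S S' i k o r :
  lin_inv h c L S -> pending h i k o -> unlinearized L k -> @rmr_step n S i o r S' ->
  cfg_inv c' S' -> (forall j, j != i -> apc c' j = apc c j) ->
  status h (rcons L (k, (i, o, r))) (apc c' i) i ->
  lin_inv h c' (rcons L (k, (i, o, r))) S'.
Proof.
case=> run lin _ st pend unlin step cfg' others st_i; split=> //.
- by rewrite map_rcons; apply: runs_rcons run step.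
- exact: partial_lin_rcons.
- move=> j; case: (eqVneq j i) => [-> // | ji].
  by rewrite others //; apply: status_rcons_lin.
Qed.

Lemma lin_inv_invoke h c c' L S i o :
  lin_inv h c L S -> alg_step rel n c (LInv i o) c' -> lin_inv (rcons h (Inv i o)) c' L S.
Proof.
case=> run lin cfg st step.
have [idle ->] : apc c i = Idle /\ c' = ACfg (aR c) (aloc c)
    (upd (apc c) i (if o is RMaxWrite x then WBegin x else RBegin)) (abuf c).
  by case: o step.
split=> //; first exact: partial_lin_invoke.
- by apply: cfg_inv_set_pc => // x; case: o {step}.
- move=> j; case: (eqVneq j i) => [-> | ji] /=.
    rewrite upd_eq; have unlin := unlinearized_size lin.
    by case: o {step} => [x|]; exists (size h); split=> //; apply: pending_rcons_inv.
  by rewrite upd_neq //; apply: status_rcons (st j) _ => /= ij; rewrite ij eqxx in ji.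
Qed.

Lemma lin_inv_respond h c c' L S i r :
  lin_inv h c L S -> alg_step rel n c (LRes i r) c' -> lin_inv (rcons h (Res i r)) c' L S.
Proof.
case=> run lin cfg st step.
have [k [o [j0 [pend Lj0 ->]]]] : exists k o j0, [/\ pending h i k o,
    onth L j0 = Some (k, (i, o, r)) & c' = ACfg (aR c) (aloc c) (upd (apc c) i Idle) (abuf c)].
  move: (st i) step => /=; case: (apc c i) => // [|v].
  - by case=> k [x [j0 [pend Lj0]]]; case: r => // -[] // ->; exists k, (RMaxWrite x), j0.
  - by case=> k [j0 [pend Lj0]]; case: r => // w [<- ->]; exists k, RMaxRead, j0.
split=> //; first exact: partial_lin_respond pend Lj0.
- exact: cfg_inv_set_pc.
- move=> j; case: (eqVneq j i) => [-> | ji] /=; first by rewrite upd_eq.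
  by rewrite upd_neq //; apply: status_rcons (st j) _ => /= ij; rewrite ij eqxx in ji.
Qed.

Lemma lin_inv_step_RBegin h c c' L S i :
  lin_inv h c L S -> apc c i = RBegin -> alg_step rel n c (LStep i) c' ->
  exists L' S', lin_inv h c' L' S'.
Proof.
move=> inv pc_i; rewrite /= pc_i => ->.
case: (inv) => _ _ cfg st; case: (cfg) => loc_bd R_bd _ _.
have [k [pend unlin]] : exists k, pending h i k RMaxRead /\ unlinearized L k.
  by move: (st i); rewrite pc_i.
set v := maxn _ _.
have [le_Si v_bd] : S i <= v /\ v <= vmax S.
  by case/andP: (loc_bd i) => le_loc loc_le; rewrite leq_max le_loc geq_max loc_le.
exists (rcons L (k, (i, RMaxRead, Rnat v))), (upd S i v).
apply: (lin_inv_linearize inv pend unlin).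
- by exists v.
- apply: (cfg_inv_update cfg) => //; rewrite ?upd_eq ?le_Si ?leqnn ?orbT ?leq_maxl //.
  + by move=> j; apply: upd_neq.
  + by move=> b b_in; rewrite in_cons b_in orbT.
- by move=> j ji; rewrite /= upd_neq.
- by rewrite /= upd_eq; exists k, (size L); split=> //; apply: onth_rcons_size.
Qed.

Lemma lin_inv_step_WBegin h c c' L S i x :
  lin_inv h c L S -> apc c i = WBegin x -> alg_step rel n c (LStep i) c' ->
  exists L' S', lin_inv h c' L' S'.
Proof.
move=> inv pc_i; rewrite /= pc_i => ->.
case: (inv) => _ _ cfg st; case: (cfg) => loc_bd R_bd _ _.
have [k [pend unlin]] : exists k, pending h i k (RMaxWrite x) /\ unlinearized L k.
  by move: (st i); rewrite pc_i.
set v := maxn _ _.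
have [le_Si v_bd] : S i <= v /\ v <= vmax S.
  by case/andP: (loc_bd i) => le_loc loc_le; rewrite leq_max le_loc geq_max loc_le.
have buf_sub : {subset abuf c <= v :: abuf c} by move=> b b_in; rewrite in_cons b_in orbT.
case: ltnP => [v_lt_x | x_le_v].
- exists L, S; apply: (lin_inv_update_cfg (i := i) inv).
  + by apply: (cfg_inv_update cfg) => //; rewrite ?leqnn ?le_Si ?v_bd ?leq_maxl // => y [<-].
  + by move=> j ji; rewrite /= upd_neq.
  + by rewrite /= upd_eq; exists k.
- exists (rcons L (k, (i, RMaxWrite x, Rbool true))), (upd S i (maxn (S i) x)).
  apply: (lin_inv_linearize inv pend unlin).
  + by [].
  + apply: (cfg_inv_update cfg) => //; rewrite ?upd_eq ?v_bd ?leq_maxl ?geq_max ?le_Si ?x_le_v //.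
    by move=> j; apply: upd_neq.
  + by move=> j ji; rewrite /= upd_neq.
  + by rewrite /= upd_eq; exists k, x, (size L); split=> //; apply: onth_rcons_size.
Qed.

Lemma lin_inv_step_WDoWrite h c c' L S i x :
  lin_inv h c L S -> apc c i = WDoWrite x -> alg_step rel n c (LStep i) c' ->
  exists L' S', lin_inv h c' L' S'.
Proof.
move=> inv pc_i step.
have [R [b [-> R_le b_sub]]] : exists R b,
    [/\ c' = ACfg R (upd (aloc c) i x) (upd (apc c) i WDone) b,
         R <= maxn (aR c) x & {subset b <= x :: abuf c}].
  move: step; rewrite /= pc_i; case: rel => ->.
  - by exists (aR c), (x :: abuf c); split; rewrite ?leq_maxl.
  - by exists x, (abuf c); split; rewrite ?leq_maxr // => b' b_in; rewrite in_cons b_in orbT.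
case: (inv) => _ _ cfg st; case: (cfg) => loc_bd _ _ pend_wr.
have [k [pend unlin]] : exists k, pending h i k (RMaxWrite x) /\ unlinearized L k.
  by move: (st i); rewrite pc_i.
have lt_x : S i < x by case/andP: (loc_bd i) => /leq_ltn_trans -> //; apply: pend_wr.
exists (rcons L (k, (i, RMaxWrite x, Rbool true))), (upd S i x).
apply: (lin_inv_linearize inv pend unlin).
- by split=> // j; rewrite /upd lt_x.
- apply: (cfg_inv_update cfg) => //; rewrite ?upd_eq ?(ltnW lt_x) ?leqnn ?orbT //.
  by move=> j; apply: upd_neq.
- by move=> j ji; rewrite /= upd_neq.
- by rewrite /= upd_eq; exists k, x, (size L); split=> //; apply: onth_rcons_size.
Qed.

Lemma lin_inv_flush h c c' L S : lin_inv h c L S -> alg_step rel n c LEnv c' -> lin_inv h c' L S.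
Proof. by case=> run lin cfg st [_ [b1 [v [b2 [bE ->]]]]]; split=> //; apply: cfg_inv_flush bE. Qed.

Lemma lin_inv_step h c c' L S l : lin_inv h c L S -> alg_step rel n c l c' ->
  exists L' S', lin_inv (h ++ history [:: l]) c' L' S'.
Proof.
move=> inv; case: l => [i o|i r|i|] step; rewrite /history /= ?cats1 ?cats0.
- by exists L, S; apply: lin_inv_invoke inv step.
- by exists L, S; apply: lin_inv_respond inv step.
- case pc_i: (apc c i) => [|x|x|||v]; try by move: step; rewrite /= pc_i.
  + exact: lin_inv_step_WBegin inv pc_i step.
  + exact: lin_inv_step_WDoWrite inv pc_i step.
  + exact: lin_inv_step_RBegin inv pc_i step.
- by exists L, S; apply: lin_inv_flush inv step.
Qed.

Lemma lin_inv_reachable ls c : 0 < n -> exec (alg rel n) (alg_init n) ls c ->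
  exists L S, lin_inv (history ls) c L S.
Proof.
move=> n_gt0; elim/last_ind: ls c => [|ls l IH] c.
  move=> ex; inversion ex; subst; exists [::], (fun _ => 1); split=> //; first exact: runs_nil.
  - exact: partial_lin_nil.
  - have one_le : 1 <= vmax (fun _ : 'I_n => 1) := leq_vmax _ (Ordinal n_gt0).
    by split=> //= j; rewrite one_le.
rewrite -cats1 => /exec_cat [c1 [ex1 ex2]].
have [L [S inv]] := IH _ ex1.
inversion ex2 as [|? ? c2 ? ? step ex3]; subst; inversion ex3; subst.
by rewrite /history pmap_cat; apply: lin_inv_step inv step.
Qed.

Lemma alg_linearizable : 0 < n -> linearizable (RangeMaxRegister n) (alg rel n).
Proof.
move=> n_gt0 ls c /(lin_inv_reachable n_gt0) [L [S [run [inv complete uniq rt] _ _]]].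
by exists L; do !split=> //; apply: runs_legal run.
Qed.

End Linearizability.

(** * Sequential exactness *)

Section SequentialExactness.

Variable n : nat.
Implicit Types (c : acfg n) (s : nat) (i : 'I_n) (o : op).

Definition quiescent s c := aR c = s /\ forall j, apc c j = Idle /\ aloc c j <= aR c.

(* [s] is the value of [R] when [i] invoked [o]. *)
Definition running i o s c :=
  [/\ forall j, aloc c j <= aR c, forall j, j != i -> apc c j = Idle &
      match apc c i with
      | Idle => False
      | WBegin x => o = RMaxWrite x /\ aR c = s
      | WDoWrite x => [/\ o = RMaxWrite x, aR c = s & s < x]
      | WDone => exists x, o = RMaxWrite x /\ aR c = maxn s x
      | RBegin => o = RMaxRead /\ aR c = s
      | RDone v => [/\ o = RMaxRead, aR c = s & v = s]
      end].

Lemma quiescent_invoke s c c' i o :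
  quiescent s c -> alg_step false n c (LInv i o) c' -> running i o s c'.
Proof.
case=> R_s idle; case: o => [x|] [_ ->]; split=> //= [j|j ji|];
  rewrite ?upd_eq ?upd_neq //; by case: (idle j).
Qed.

Lemma running_step i o s c c' j :
  running i o s c -> alg_step false n c (LStep j) c' -> running i o s c'.
Proof.
case=> loc_le idle pc_i; case: (eqVneq j i) => [-> | ji] /=; last by rewrite idle.
have others p k : k != i -> upd (apc c) i p k = Idle by move=> ki; rewrite upd_neq // idle.
have -> : maxn (aloc c i) (aR c) = aR c by apply/maxn_idPr.
case: (apc c i) pc_i => // [x [-> R_s] | x [-> R_s s_x] | [-> R_s]] ->.
- split=> /=; [exact: upd_le | exact: others |].
  rewrite upd_eq R_s; case: ltnP => // x_le_s; exists x; split=> //.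
  by apply/esym/maxn_idPl.
- have x_bd : forall k, aloc c k <= x by move=> k; rewrite (leq_trans (loc_le k)) // R_s ltnW.
  split=> /=; [exact: upd_le | exact: others |].
  by rewrite upd_eq; exists x; split=> //; apply/esym/maxn_idPr/ltnW.
- by split=> /=; [exact: upd_le | exact: others | rewrite upd_eq].
Qed.

Lemma running_respond i o s c c' r :
  running i o s c -> alg_step false n c (LRes i r) c' ->
  exists2 s', @mr_step n s i o r s' & quiescent s' c'.
Proof.
case=> loc_le idle pc_i /=.
have q : forall j, upd (apc c) i Idle j = Idle /\ aloc c j <= aR c.
  by move=> j; case: (eqVneq j i) => [-> | ji]; rewrite ?upd_eq ?upd_neq ?idle.
case: (apc c i) pc_i => // [[x [-> R_sx]] | v [-> R_s v_s]].
- case: r => // -[] // ->; exists (aR c); first by rewrite R_sx.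
  by split=> //= j; apply: q.
- case: r => // w [<- ->]; exists (aR c); first by rewrite R_s v_s.
  by split=> //= j; apply: q.
Qed.

Lemma seqhist_invoke h l i o : seqhist (Inv i o :: h) l ->
  l = [::] \/ exists r h' l', [/\ h = Res i r :: h', l = (i, o, r) :: l' & seqhist h' l'].
Proof.
move E: (Inv i o :: h) => h0 sh; case: sh E => [// | _ _ _ | i' o' r h' l' sh [-> -> hE]].
- by left.
- by right; exists r, h', l'.
Qed.

Definition seq_legal c (ls : seq (label n)) :=
  (forall s, quiescent s c -> forall l, seqhist (history ls) l -> legal (MaxRegister n) s l) /\
  (forall i o s, running i o s c -> forall r h l, history ls = Res i r :: h -> seqhist h l ->
     exists2 s', @mr_step n s i o r s' & legal (MaxRegister n) s' l).

Lemma exec_seq_legal c ls c' : exec (alg false n) c ls c' -> seq_legal c ls.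
Proof.
elim=> {c ls c'} [c|c l c1 ls c2 step _ [IHq IHr]].
  by split=> // s _ l sh; inversion sh.
have idle s : quiescent s c -> forall j, apc c j = Idle by move=> [_ q] j; case: (q j).
case: l step => [i o|i r|i|] step; split; rewrite /history /= -/(history ls).
- move=> s q l /seqhist_invoke [-> // | [r [h [l' [hE -> sh]]]]].
  by have [s' st leg] := IHr _ _ _ (quiescent_invoke q step) _ _ _ hE sh; exists s'.
- by [].
- by move=> s /idle idle_c; move: step; rewrite /= idle_c.
- move=> i' o s run r' h l [ii' rr' hE] sh; subst i' r' h.
  by have [s' st q] := running_respond run step; exists s' => //; apply: IHq q _ _.
- by move=> s /idle idle_c; move: step; rewrite /= idle_c.
- by move=> i' o s /running_step/(_ step) run; apply: IHr.
- by case: step.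
- by case: step.
Qed.

Lemma alg_sequentially_exact : sequentially_exact (alg false n).
Proof. by move=> ls c l /exec_seq_legal [legal_q _]; apply: legal_q. Qed.

End SequentialExactness.

(** * Step complexity and wait-freedom *)

Definition actions_left (p : pcs) : nat :=
  match p with
  | Idle => 0
  | WBegin _ => 3
  | WDoWrite _ | RBegin => 2
  | WDone | RDone _ => 1
  end.

Section StepComplexity.

Variables (rel : bool) (n : nat).
Implicit Types (c : acfg n) (i : 'I_n).

Lemma apc_frame c l c' i : alg_step rel n c l c' -> apc c i <> Idle -> ~~ is_action_of i l ->
  apc c' i = apc c i.
Proof.
case: l => [j o|j r|j|] /=.
- case: o => [x|] [idle ->] busy _ /=; rewrite upd_neq //;
    by apply/eqP=> ij; rewrite ij idle in busy.
- move=> + _ ji; case: (apc c j) => [|||||v] //; case: r => [[]|w] //.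
  + by move=> -> /=; rewrite upd_neq // eq_sym.
  + by case=> _ -> /=; rewrite upd_neq // eq_sym.
- move=> + _ ji; case: (apc c j) => [|x|x|||v] //=; try case: rel;
    by move=> -> /=; rewrite upd_neq // eq_sym.
- by case=> _ [b1 [v [b2 [_ ->]]]].
Qed.

Lemma actions_left_step c i c' : alg_step rel n c (LStep i) c' ->
  apc c' i <> Idle /\ actions_left (apc c' i) < actions_left (apc c i).
Proof.
rewrite /=; case: (apc c i) => [|x|x|||v] //; try case: rel;
  by move=> -> /=; rewrite upd_eq //; case: ifP.
Qed.

Lemma count_steps_lt c ls c' i : exec (alg rel n) c ls c' -> apc c i <> Idle ->
  ~~ has (is_res_of i) ls -> count (is_step_of i) ls < actions_left (apc c i).
Proof.
elim=> {c ls c'} [c|c l c1 ls c2 step _ IH] busy /=; first by case: (apc c i) busy.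
rewrite negb_or => /andP [not_res /IH {}IH].
case act: (is_action_of i l).
- case: l step act not_res => [j o|j r|j|] //= step /eqP ji; subst j; first by rewrite eqxx.
  by have [busy' lt] := actions_left_step step; have := IH busy'; rewrite eqxx; lia.
- have -> : is_step_of i l = false by case: l act {step not_res} => //= j ->.
  have frame := apc_frame step busy (negbT act).
  by rewrite -frame; apply: IH; rewrite frame.
Qed.

Lemma alg_step_complexity : step_complexity_le (alg rel n) 2.
Proof.
move=> ls cf ex k i o m inv no_res.
have [c0 [c1 [step ex1]]] := exec_onth ex inv.
rewrite -(cat_take_drop m (drop k.+1 ls)) in ex1.
have [c2 [ex2 _]] := exec_cat ex1.
have busy : apc c1 i = if o is RMaxWrite x then WBegin x else RBegin.
  by case: o step {ex1 ex2 inv} => [x|] [_ ->] /=; rewrite upd_eq.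
have busy_ne : apc c1 i <> Idle by rewrite busy; case: o {step busy inv}.
have := count_steps_lt ex2 busy_ne no_res; rewrite busy.
by case: o {step busy busy_ne inv} => [x|] /=; lia.
Qed.

End StepComplexity.

Lemma exec_mkseq n (I : impl n) sched : inf_exec I sched ->
  forall N, exists c, exec I (iinit I) (mkseq sched N) c.
Proof.
case=> cs [cs0 st] N; exists (cs N); elim: N => [|N IH]; first by rewrite cs0; constructor.
by rewrite mkseqS; apply: exec_rcons IH (st N).
Qed.

Lemma count_steps_actions n (i : 'I_n) ls : ~~ has (is_res_of i) ls ->
  count (is_step_of i) ls = count (is_action_of i) ls.
Proof.
elim: ls => //= l ls IH; rewrite negb_or => /andP [not_res /IH ->].
by case: l not_res => //= j r /negPf ->.
Qed.

Lemma count_actions_unbounded n (i : 'I_n) (sched : nat -> label n) a :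
  (forall T, exists t, T <= t /\ is_action_of i (sched t)) ->
  forall m, exists T, m <= count (is_action_of i) (map sched (iota a T)).
Proof.
move=> active; elim=> [|m [T le_m]]; first by exists 0.
have [t [le_t act]] := active (a + T); exists (t - a).+1.
have -> : (t - a).+1 = T + (t - (a + T)).+1 by lia.
have hit : 0 < count (is_action_of i) (map sched (iota (a + T) (t - (a + T)).+1)).
  by rewrite -has_count has_map; apply/hasP; exists t => //; rewrite mem_iota; lia.
by rewrite iotaD map_cat count_cat; lia.
Qed.

Lemma step_complexity_wait_free n (I : impl n) b : step_complexity_le I b -> wait_free I.
Proof.
move=> bound sched ex k i o inv active.
have [T many] := count_actions_unbounded k.+1 active b.+1.
have [c exN] := exec_mkseq ex (k.+1 + T).
have window : take T (drop k.+1 (mkseq sched (k.+1 + T))) = map sched (iota k.+1 T).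
  rewrite /mkseq iotaD map_cat drop_size_cat ?size_map ?size_iota // add0n.
  by rewrite take_oversize // size_map size_iota.
have invk : onth (mkseq sched (k.+1 + T)) k = Some (LInv i o).
  by rewrite onthE -map_comp (nth_map 0) ?size_iota ?leq_addr // nth_iota ?leq_addr //= add0n inv.
case: (boolP (has (is_res_of i) (map sched (iota k.+1 T)))) => [| no_res].
- rewrite has_map => /hasP [t]; rewrite mem_iota => /andP [lt_t _] /=.
  by case tE: (sched t) => [|j r||] //= /eqP ji; exists t, r; rewrite tE ji.
- have := bound _ _ exN k i o T invk; rewrite window => /(_ no_res).
  by rewrite count_steps_actions //; lia.
Qed.

Theorem theorem4 :
  exists c : nat, forall n : nat, 2 <= n ->
    linearizable (RangeMaxRegister n) (alg false n) /\
    sequentially_exact (alg false n) /\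
    wait_free (alg false n) /\
    fence_free n /\
    step_complexity_le (alg false n) c.
Proof.
exists 2 => n n_ge2; have n_gt0 : 0 < n by apply: leq_trans n_ge2.
have steps := @alg_step_complexity false n.
split; first exact: alg_linearizable.
split; first exact: alg_sequentially_exact.
split; first exact: step_complexity_wait_free steps.
split; first exact: alg_linearizable.
exact: steps.
Qed.
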